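(* Let $p$ be a prime, $k\ge 1$, and $q=p^k$. Every integer group determinant $D$ of the group $GA(1,q)$ can be written in the form $$D=AB^{q-1},$$ where $A$ is a $\mathbb Z_{q-1}$ integer group determinant and $B$ is an integer with $B\equiv A \pmod q$.
   Context: For a finite group $G=\{g_1,\dots,g_n\}$ and an element $\sum_{g\in G}a_g g$ of the group ring $\mathbb Z[G]$ (all $a_g\in\mathbb Z$), the group determinant is $D\left(\sum_{g\in G}a_g g\right)=\det\left(a_{g_ig_j^{-1}}\right)_{i,j=1}^n$. An integer group determinant of $G$ is any integer of this form (with integer coefficients $a_g$). A $\mathbb Z_m$ integer group determinant (or $\mathbb Z_m$ integer determinant) is an integer group determinant of the cyclic group $\mathbb Z_m$; equivalently, an integer of the form $\prod_{x^m=1}f(x)$ for some $f\in\mathbb Z[x]$, the product being over all complex $m$-th roots of unity. The general affine group of degree one over $\mathbb F_q$ is $GA(1,q)=\left\{\begin{pmatrix} a & b\\ 0 & 1\end{pmatrix}: a\in\mathbb F_q^*,\ b\in\mathbb F_q\right\}$ under matrix multiplication, i.e. the semidirect product $\mathbb F_q\rtimes\mathbb F_q^*$ with $\mathbb F_q^*$ acting by multiplication; it has order $q(q-1)$. *)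

From mathcomp Require Import all_boot all_order all_algebra all_fingroup all_field.
Set Implicit Arguments. Unset Strict Implicit. Unset Printing Implicit Defensive.
Import GRing.Theory Num.Theory.
Local Open Scope ring_scope.

Definition group_det (T : finType) (mul : T -> T -> T) (inv : T -> T)
  (a : T -> int) : int :=
  \det (\matrix_(i < #|T|, j < #|T|) a (mul (enum_val i) (inv (enum_val j)))).

Definition int_group_det (T : finType) (mul : T -> T -> T) (inv : T -> T)
  (D : int) : Prop :=
  exists a : T -> int, D = group_det mul inv a.

Lemma ord_pos (m : nat) (i : 'I_m) : (0 < m)%N.
Proof. exact: leq_ltn_trans (leq0n i) (ltn_ord i). Qed.

Definition Zm_add (m : nat) (i j : 'I_m) : 'I_m :=
  Ordinal (ltn_pmod (i + j) (ord_pos i)).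
Definition Zm_opp (m : nat) (i : 'I_m) : 'I_m :=
  Ordinal (ltn_pmod (m - i) (ord_pos i)).

Definition Zm_int_det (m : nat) (D : int) : Prop :=
  int_group_det (@Zm_add m) (@Zm_opp m) D.

(* GA(1,F) = { [[a, b], [0, 1]] : a in F^*, b in F }, represented by pairs (a, b). *)
Definition GA_mul (F : finFieldType) (x y : ({unit F} * F)%type) : ({unit F} * F)%type :=
  ((x.1 * y.1)%g, val x.1 * y.2 + x.2).
Definition GA_inv (F : finFieldType) (x : ({unit F} * F)%type) : ({unit F} * F)%type :=
  ((x.1)^-1%g, - (val (x.1^-1)%g * x.2)).

From HB Require Import structures.
From mathcomp Require Import all_boot all_order all_algebra all_fingroup all_field.
From mathcomp Require Import all_solvable.
Set Implicit Arguments. Unset Strict Implicit. Unset Printing Implicit Defensive.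
Import GRing.Theory Num.Theory.
Local Open Scope ring_scope.

(* Ordering them by (u, b/u),
   the group matrix becomes a block matrix over F^* x F^* whose (u, v) block is
   the regular matrix of an element E(u, v) of the group ring Z[F] of the
   additive group of F.  All these blocks commute, so over C they are
   simultaneously triangular, with diagonals given by the characters of F, and
   D is the product of the values at those characters of X = det E, computed
   in the commutative ring Z[F].  Reindexing the blocks by a unit t shows that
   X is invariant under b |-> t b, so X = alpha + beta N with N the sum of all
   elements of F.  The trivial character sends X to A = alpha + q beta and
   every other one to B = alpha, whence D = A B^(q-1) and B = A mod q.
   Finally A is the augmentation of X, that is the determinant of the
   augmentations of the E(u, v), a group matrix of the cyclic group F^*. *)

Section GroupRing.
Variable V : finZmodType.

Definition gring := {ffun V -> int}.
HB.instance Definition _ := GRing.Zmodule.on gring.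

Definition gring_mul (x y : gring) : gring :=
  [ffun c => \sum_(d : V) x d * y (c - d)].
Definition gring_one : gring := [ffun c => (c == 0)%:Z].

Lemma gring_mulA : associative gring_mul.
Proof.
move=> x y z; apply/ffunP => c; rewrite /gring_mul !ffunE.
under eq_bigr do rewrite ffunE mulr_sumr.
under [RHS]eq_bigr do rewrite ffunE mulr_suml.
rewrite [RHS]exchange_big /=; apply: eq_bigr => d _.
rewrite [RHS](reindex_inj (addrI d)) /=.
apply: eq_bigr => e _; rewrite mulrA; congr (_ * _ * z _).
  by rewrite addrC addKr.
by rewrite opprD addrA.
Qed.

Lemma gring_mulC : commutative gring_mul.
Proof.
move=> x y; apply/ffunP => c; rewrite /gring_mul !ffunE.
rewrite (reindex_inj (inv_inj (subKr c))) /=.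
by apply: eq_bigr => d _; rewrite subKr mulrC.
Qed.

Lemma gring_mul1 : left_id gring_one gring_mul.
Proof.
move=> x; apply/ffunP => c; rewrite /gring_mul !ffunE (bigD1 0) //= big1 ?addr0.
  by rewrite ffunE eqxx mul1r subr0.
by move=> d /negbTE nd; rewrite ffunE nd mul0r.
Qed.

Lemma gring_mulDl : left_distributive gring_mul +%R.
Proof.
move=> x y z; apply/ffunP => c; rewrite /gring_mul !ffunE -big_split /=.
by apply: eq_bigr => d _; rewrite ffunE mulrDl.
Qed.

Lemma gring_one_neq0 : gring_one != 0.
Proof. by apply/eqP => /ffunP /(_ 0); rewrite !ffunE eqxx. Qed.

HB.instance Definition _ := GRing.Zmodule_isComNzRing.Build gring
  gring_mulA gring_mulC gring_mul1 gring_mulDl gring_one_neq0.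

Lemma gring_mulE (x y : gring) c : (x * y) c = \sum_(d : V) x d * y (c - d).
Proof. by rewrite /GRing.mul /= ffunE. Qed.

Lemma gring_oneE c : (1 : gring) c = (c == 0)%:Z.
Proof. by rewrite /GRing.one /= ffunE. Qed.

Definition augment (x : gring) : int := \sum_c x c.

Lemma augment_is_zmod_morphism : zmod_morphism augment.
Proof.
move=> x y; rewrite /augment -sumrB; apply: eq_bigr => c _.
by rewrite !ffunE.
Qed.

Lemma augment_is_monoid_morphism : monoid_morphism augment.
Proof.
split.
  rewrite /augment (bigD1 0) //= big1 ?addr0; first by rewrite gring_oneE eqxx.
  by move=> d /negbTE nd; rewrite gring_oneE nd.
move=> x y; rewrite /augment mulr_suml.
under eq_bigr do rewrite gring_mulE.
rewrite exchange_big /=; apply: eq_bigr => d _.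
rewrite mulr_sumr (reindex_inj (addrI d)) /=.
by apply: eq_bigr => e _; rewrite addrC addKr.
Qed.

HB.instance Definition _ :=
  GRing.isZmodMorphism.Build gring int augment augment_is_zmod_morphism.
HB.instance Definition _ :=
  GRing.isMonoidMorphism.Build gring int augment augment_is_monoid_morphism.

Definition gring_ones : gring := [ffun _ => 1].

Lemma augment_ones : augment gring_ones = #|V|%:R.
Proof.
rewrite /augment (eq_bigr (fun=> 1)) => [|c _]; last by rewrite ffunE.
by rewrite sumr_const.
Qed.

Lemma gring_ones_sqr : gring_ones * gring_ones = gring_ones *+ #|V|.
Proof.
apply/ffunP => c; rewrite gring_mulE ffunMnE !ffunE.
under eq_bigr do rewrite !ffunE mulr1.
by rewrite sumr_const.
Qed.

Lemma gring_const_off0E (y : gring) b :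
  (forall c, c != 0 -> y c = b) -> y = 1 *~ (y 0 - b) + gring_ones *~ b.
Proof.
move=> yb; apply/ffunP => c; rewrite ffunE !ffunMzE gring_oneE ffunE.
have [->|c0] := eqVneq c 0; last by rewrite mul0rz add0r intz yb.
by rewrite -[1%Z *~ _]/((y 0 - b)%:~R) !intz subrK.
Qed.

Lemma augment_const_off0 (y : gring) b :
  (forall c, c != 0 -> y c = b) -> augment y = y 0 - b + b *+ #|V|.
Proof.
move=> yb; rewrite {1}(gring_const_off0E yb) rmorphD !rmorphMz rmorph1 intz.
by rewrite /= augment_ones -mulrzr intz mulr_natl.
Qed.

End GroupRing.

Lemma sum_enum_val (R : nmodType) (I : finType) (F : I -> R) :
  \sum_z F z = \sum_(k < #|I|) F (enum_val k).
Proof. by rewrite -big_enum_val. Qed.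

Section FinDet.
Variable R : comNzRingType.

Definition fdet (I : finType) (f : I -> I -> R) : R :=
  \det (\matrix_(i < #|I|, j < #|I|) f (enum_val i) (enum_val j)).

Lemma eq_fdet (I : finType) (f g : I -> I -> R) :
  (forall x y, f x y = g x y) -> fdet f = fdet g.
Proof. by move=> fg; congr (\det _); apply/matrixP => i j; rewrite !mxE. Qed.

Lemma det_perm_conj n (A : 'M[R]_n) (s : 'S_n) :
  \det (\matrix_(i, j) A (s i) (s j)) = \det A.
Proof.
have -> : \matrix_(i, j) A (s i) (s j) = row_perm s (col_perm s A).
  by apply/matrixP => i j; rewrite !mxE.
rewrite row_permE col_permE !det_mulmx !det_perm odd_permV mulrA mulrC mulrA.
by rewrite -signr_addb addbb expr0 mul1r.
Qed.

Lemma fdet_ord_bij (I : finType) n (e : 'I_n -> I) (f : I -> I -> R) :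
  bijective e -> \det (\matrix_(i, j) f (e i) (e j)) = fdet f.
Proof.
move=> be; have en : n = #|I| by rewrite -(bij_eq_card be) card_ord.
subst n; have inj_s : injective (enum_rank \o e).
  by move=> x y /= /enum_rank_inj; apply: (bij_inj be).
rewrite /fdet -[RHS](det_perm_conj _ (perm inj_s)); congr (\det _).
by apply/matrixP => i j; rewrite !mxE !permE /= !enum_rankK.
Qed.

Lemma fdet_reindex (I J : finType) (h : J -> I) (f : I -> I -> R) :
  bijective h -> fdet (fun x y => f (h x) (h y)) = fdet f.
Proof.
move=> bh; apply: (fdet_ord_bij (e := h \o enum_val)).
by apply: bij_comp => //; exact: enum_val_bij.
Qed.

Lemma fdet_lblock (I1 I2 : finType) (g : I1 + I2 -> I1 + I2 -> R) :
  (forall x y, g (inl x) (inr y) = 0) ->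
  fdet g = fdet (fun x y => g (inl x) (inl y)) * fdet (fun x y => g (inr x) (inr y)).
Proof.
move=> g0.
pose e (k : 'I_(#|I1| + #|I2|)) : I1 + I2 :=
  match split k with inl i => inl (enum_val i) | inr j => inr (enum_val j) end.
have be : bijective e.
  exists (fun x => match x with inl x1 => lshift #|I2| (enum_rank x1)
                   | inr x2 => rshift #|I1| (enum_rank x2) end).
    by move=> k; rewrite /e -[k in RHS]splitK; case: (split k) => i /=; rewrite enum_valK.
  by case=> x; rewrite /e ?(unsplitK (inl _)) ?(unsplitK (inr _)) enum_rankK.
rewrite -(fdet_ord_bij _ be).
have -> : \matrix_(i, j) g (e i) (e j) =
  block_mx (\matrix_(i, j) g (inl (enum_val i)) (inl (enum_val j))) 0
           (\matrix_(i, j) g (inr (enum_val i)) (inl (enum_val j)))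
           (\matrix_(i, j) g (inr (enum_val i)) (inr (enum_val j))).
  apply/matrixP => i j; rewrite /e !mxE.
  by case: (split i) => i1; rewrite !mxE; case: (split j) => j1; rewrite !mxE ?g0.
exact: det_lblock.
Qed.

Lemma fdet_trig_snd (J : finType) n (f : J * 'I_n -> J * 'I_n -> R) :
  (forall u (i : 'I_n) v (j : 'I_n), (i < j)%N -> f (u, i) (v, j) = 0) ->
  fdet f = \prod_(i < n) fdet (fun u v => f (u, i) (v, i)).
Proof.
elim: n f => [|n IH] f ftrig.
  rewrite big_ord0 /fdet; move: (\matrix_(i, j) _) => /=.
  by rewrite card_prod card_ord muln0 => M; exact: det_mx00.
pose h (x : J + J * 'I_n) : J * 'I_n.+1 :=
  match x with inl u => (u, ord0) | inr ui => (ui.1, lift ord0 ui.2) end.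
have bh : bijective h.
  exists (fun x : J * 'I_n.+1 => match unlift ord0 x.2 with
            | None => inl x.1 | Some i => inr (x.1, i) end).
    by case=> [u|[u i]] /=; rewrite ?unlift_none ?liftK.
  by case=> u i /=; case: unliftP => [j ->|->].
rewrite -(fdet_reindex f bh) fdet_lblock => [|x [v j]]; last by rewrite /h ftrig.
rewrite big_ord_recl (IH (fun x y => f (h (inr x)) (h (inr y)))) //.
by move=> u i v j lij; rewrite ftrig.
Qed.

Lemma fdet_conj (I : finType) (f q q' : I -> I -> R) :
  (forall x y, \sum_z q x z * q' z y = (x == y)%:R) ->
  fdet (fun x y => \sum_z \sum_w q x z * f z w * q' w y) = fdet f.
Proof.
move=> qq.
pose M (g : I -> I -> R) := \matrix_(i < #|I|, j < #|I|) g (enum_val i) (enum_val j).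
have MqK : M q *m M q' = 1%:M.
  apply/matrixP => i j; rewrite !mxE.
  under eq_bigr do rewrite !mxE.
  by rewrite -(sum_enum_val (fun z => q (enum_val i) z * q' z (enum_val j))) qq
     (inj_eq enum_val_inj).
have -> : fdet (fun x y => \sum_z \sum_w q x z * f z w * q' w y)
          = \det (M q *m M f *m M q').
  congr (\det _); apply/matrixP => i j; rewrite !mxE.
  under [RHS]eq_bigr do rewrite mxE mulr_suml.
  rewrite [RHS]exchange_big sum_enum_val; apply: eq_bigr => l _.
  by rewrite sum_enum_val; apply: eq_bigr => k _; rewrite !mxE.
by rewrite !det_mulmx mulrAC -det_mulmx MqK det1 mul1r.
Qed.

Lemma fdet_blockdiag_conj (J : finType) n (P P' : 'M[R]_n) (B : J -> J -> 'M[R]_n) :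
  P *m P' = 1%:M ->
  fdet (fun x y : J * 'I_n => (P *m B x.1 y.1 *m P') x.2 y.2)
  = fdet (fun x y => B x.1 y.1 x.2 y.2).
Proof.
move=> PK.
pose Q (A : 'M[R]_n) (x y : J * 'I_n) := (x.1 == y.1)%:R * A x.2 y.2.
have sum_diag (G : J * 'I_n -> R) u :
    (forall z, z.1 != u -> G z = 0) -> \sum_z G z = \sum_k G (u, k).
  move=> G0; rewrite (eq_bigr (fun z => G (z.1, z.2))) => [|[] //].
  rewrite -(pair_bigA _ (fun w k => G (w, k))) (bigD1 u) //=.
  by rewrite [X in _ + X]big1 ?addr0 // => w wu; apply: big1 => k _; rewrite G0.
rewrite -[RHS](fdet_conj _ (q := Q P) (q' := Q P')) => [|[u i] [v j]].
  apply: eq_fdet => -[u i] [v j] /=.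
  rewrite (sum_diag _ u) => [|[w k] /= wu]; last first.
    by apply: big1 => z _; rewrite /Q /= eq_sym (negbTE wu) !mul0r.
  rewrite !mxE; under eq_bigr do rewrite mxE mulr_suml.
  rewrite exchange_big /=; apply: eq_bigr => k _.
  rewrite (sum_diag _ v) => [|[w l] /= wv]; last by rewrite /Q /= (negbTE wv) !mul0r mulr0.
  by apply: eq_bigr => l _; rewrite /Q /= !eqxx !mul1r.
rewrite (sum_diag _ u) => [|[w k] /= wu]; last by rewrite /Q /= eq_sym (negbTE wu) !mul0r.
under eq_bigr do rewrite /Q /= mulrACA.
have /matrixP/(_ i j) := PK; rewrite -mulr_sumr !mxE => ->.
by rewrite eqxx mul1r xpair_eqE; case: (u == v); rewrite ?mul0r ?mul1r.
Qed.

End FinDet.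

Lemma group_detE (T : finType) (mul : T -> T -> T) (inv : T -> T) (a : T -> int) :
  group_det mul inv a = fdet (fun x y => a (mul x (inv y))).
Proof. by []. Qed.

Lemma rmorph_fdet (R S : comNzRingType) (phi : {rmorphism R -> S}) (I : finType)
  (f : I -> I -> R) : phi (fdet f) = fdet (fun x y => phi (f x y)).
Proof. by rewrite /fdet -det_map_mx; congr (\det _); apply/matrixP => i j; rewrite !mxE. Qed.

Lemma prod_add_scaled_idempotents (R : numDomainType) n q (c : 'I_n -> R) (al be : R) :
  (0 < q)%N -> (forall k, c k * c k = c k * q%:R) -> \sum_k c k = q%:R ->
  \prod_k (al + c k * be) = (al + q%:R * be) * al ^+ n.-1.
Proof.
move=> q0 cq csum.
pose S := [set k | c k != 0].
have cS k : k \in S -> c k = q%:R.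
  by rewrite inE => ck; apply: (mulfI ck); rewrite cq mulrC.
have cnS k : k \notin S -> c k = 0 by rewrite inE negbK => /eqP.
have cardS : #|S| = 1%N.
  have qn0 : (q%:R : R) != 0 by rewrite pnatr_eq0 -lt0n.
  have : \sum_k c k = #|S|%:R * q%:R.
    rewrite (bigID (mem S)) /= [X in _ + X]big1 ?addr0 => [|k /cnS //].
    by rewrite (eq_bigr (fun _ => q%:R)) => [|k /cS //]; rewrite sumr_const mulr_natl.
  rewrite csum -{1}[q%:R]mul1r => /(mulIf qn0) /eqP.
  by rewrite -(mulr1n (1 : R)) eqr_nat eq_sym => /eqP.
rewrite (bigID (mem S)) /= (eq_bigr (fun _ => al + q%:R * be)) => [|k /cS -> //].
rewrite [X in _ * X](eq_bigr (fun _ => al)) => [|k /cnS ->]; last by rewrite mul0r addr0.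
rewrite !prodr_const cardS expr1; congr (_ * al ^+ _).
have -> : #|[pred k | k \notin S]| = #|~: S| by apply: eq_card => k; rewrite in_setC.
by rewrite cardsCs setCK card_ord cardS subn1.
Qed.

Lemma trig_mxM_diag (R : pzRingType) n (A B : 'M[R]_n) k :
  is_trig_mx A -> is_trig_mx B -> (A *m B) k k = A k k * B k k.
Proof.
move=> /is_trig_mxP tA /is_trig_mxP tB; rewrite mxE (bigD1 k) //= big1 ?addr0 //.
move=> j /negbTE nj; case: (ltngtP k j) => [kj|jk|/val_inj e].
- by rewrite tA // mul0r.
- by rewrite tB // mulr0.
- by rewrite e eqxx in nj.
Qed.

Section RegularMatrix.
Variables (C : numClosedFieldType) (V : finZmodType).

Definition regmx (x : gring V) : 'M[C]_#|V| :=
  \matrix_(i, j) (x (enum_val i - enum_val j))%:~R.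

Lemma regmx_is_zmod_morphism : zmod_morphism regmx.
Proof. by move=> x y; apply/matrixP => i j; rewrite !mxE !ffunE rmorphB. Qed.

HB.instance Definition _ :=
  GRing.isZmodMorphism.Build (gring V) 'M[C]_#|V| regmx regmx_is_zmod_morphism.

Lemma regmxM x y : regmx (x * y) = regmx x *m regmx y.
Proof.
apply/matrixP => i j; rewrite !mxE gring_mulE rmorph_sum.
rewrite (reindex_inj (inv_inj (subKr (enum_val i)))) /= sum_enum_val.
apply: eq_bigr => k _; rewrite !mxE rmorphM; congr (_ * (y _)%:~R).
by rewrite opprB addrC addrA subrK.
Qed.

Lemma regmx1 : regmx 1 = 1%:M.
Proof.
apply/matrixP => i j; rewrite !mxE gring_oneE subr_eq0 (inj_eq enum_val_inj).
by case: (i == j).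
Qed.

Lemma regmx_cotrig :
  exists2 P : 'M[C]_#|V|, P \in unitmx &
    forall x, is_trig_mx (P *m regmx x *m invmx P).
Proof.
pose delta (d : V) : gring V := [ffun c => (c == d)%:Z].
have decomp (x : gring V) : x = \sum_d delta d *~ x d.
  apply/ffunP => c; rewrite sum_ffunE (bigD1 c) //= big1 ?addr0.
    by rewrite ffunMzE ffunE eqxx intz.
  by move=> d /negbTE nd; rewrite ffunMzE ffunE eq_sym nd mul0rz.
pose As := [seq regmx (delta d) | d <- enum V].
have comm : {in As &, forall A B, comm_mx A B}.
  by move=> A B /mapP [d _ ->] /mapP [e _ ->]; rewrite /comm_mx -!regmxM mulrC.
have [P Pu Pall] := cotrigonalization comm.
have Pun : P \in unitmx by exact: unitarymx_unit.
exists P => // x.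
have trig_delta d : is_trig_mx (P *m regmx (delta d) *m invmx P).
  have /allP /(_ (regmx (delta d))) := Pall.
  rewrite /similar_to /conjmx pinvmxE //; apply.
  by apply/mapP; exists d; rewrite ?mem_enum.
apply/is_trig_mxP => i j lij; rewrite [x]decomp raddf_sum.
rewrite mulmx_sumr mulmx_suml summxE big1 // => d _.
rewrite raddfMz -scaler_int -scalemxAr -scalemxAl mxE.
by have /is_trig_mxP -> := trig_delta d; rewrite ?mulr0.
Qed.

Section DiagonalCharacters.
Variable P : 'M[C]_#|V|.
Hypotheses (Pu : P \in unitmx) (Ptrig : forall x, is_trig_mx (P *m regmx x *m invmx P)).

Definition diag_char (k : 'I_#|V|) (x : gring V) : C := (P *m regmx x *m invmx P) k k.

Lemma diag_char_is_zmod_morphism k : zmod_morphism (diag_char k).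
Proof. by move=> x y; rewrite /diag_char raddfB mulmxBr mulmxBl !mxE. Qed.

Lemma diag_char_is_monoid_morphism k : monoid_morphism (diag_char k).
Proof.
split; first by rewrite /diag_char regmx1 mulmx1 mulmxV // mxE eqxx.
by move=> x y; rewrite /diag_char -trig_mxM_diag // regmxM !mulmxA mulmxKV.
Qed.

HB.instance Definition _ k := GRing.isZmodMorphism.Build (gring V) C (diag_char k)
  (diag_char_is_zmod_morphism k).
HB.instance Definition _ k := GRing.isMonoidMorphism.Build (gring V) C (diag_char k)
  (diag_char_is_monoid_morphism k).

Lemma fdet_regmx_blocks (J : finType) (E : J -> J -> gring V) :
  fdet (fun x y : J * 'I_#|V| => regmx (E x.1 y.1) x.2 y.2)
  = \prod_k diag_char k (fdet E).
Proof.
rewrite -(fdet_blockdiag_conj (fun u v => regmx (E u v)) (mulmxV Pu)).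
rewrite fdet_trig_snd => [|u i v j lij /=]; last first.
  by have /is_trig_mxP -> := Ptrig (E u v).
by apply: eq_bigr => k _; rewrite rmorph_fdet.
Qed.

Lemma prod_diag_char_const_off0 (y : gring V) b :
  (forall c, c != 0 -> y c = b) ->
  \prod_k diag_char k y = (augment y * (y 0 - b) ^+ #|V|.-1)%:~R.
Proof.
move=> yb; rewrite (augment_const_off0 yb) {1}(gring_const_off0E yb).
set al := y 0 - b; set N := gring_ones V.
have V0 : (0 < #|V|)%N by apply/card_gt0P; exists 0.
under eq_bigr do rewrite rmorphD !rmorphMz rmorph1 -[_ *~ b]mulrzr.
rewrite (prod_add_scaled_idempotents (q := #|V|)) //.
- by rewrite mulr_natl -rmorphMn -rmorphD rmorphM rmorphXn.
- by move=> k; rewrite -rmorphM /= gring_ones_sqr rmorphMn mulr_natr.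
rewrite /diag_char -/(\tr _) mxtrace_mulC mulmxA mulVmx // mul1mx /mxtrace.
under eq_bigr do rewrite mxE ffunE.
by rewrite sumr_const card_ord.
Qed.

End DiagonalCharacters.
End RegularMatrix.

Lemma Zm_int_det_cyclic (G : finGroupType) (s : G -> int) :
  cyclic [set: G] -> Zm_int_det #|G| (fdet (fun u v => s (u * v^-1)%g)).
Proof.
case/cyclicP => g gen; have og : #[g]%g = #|G| by rewrite /order -gen cardsT.
pose iota (i : 'I_#|G|) : G := (g ^+ i)%g.
have inj_iota : injective iota.
  move=> i j /eqP; rewrite /iota eq_expg_mod_order og !modn_small //.
  by move/eqP/val_inj.
have bij_iota : bijective iota := inj_card_bij inj_iota (eq_leq (esym (card_ord _))).
exists (s \o iota); rewrite group_detE -(fdet_reindex _ bij_iota).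
apply: eq_fdet => i j /=.
have gG : (g ^+ #|G| = 1)%g by rewrite -og expg_order.
rewrite /iota /Zm_add /Zm_opp /= (expg_mod _ gG) expgD (expg_mod _ gG).
congr (s (_ * _)%g); apply/eqP; rewrite eq_invg_mul -expgD.
by rewrite subnKC ?gG // ltnW.
Qed.

Section AffineGroup.
Variable F : finFieldType.

Definition gscale (t : {unit F}) (x : gring F) : gring F := [ffun c => x (val t * c)].

Lemma gscale_is_zmod_morphism t : zmod_morphism (gscale t).
Proof. by move=> x y; apply/ffunP => c; rewrite !ffunE. Qed.

Lemma gscale_is_monoid_morphism t : monoid_morphism (gscale t).
Proof.
have tu : val t \is a GRing.unit := valP t.
split.
  apply/ffunP => c; rewrite ffunE !gring_oneE mulf_eq0.
  by move: tu; rewrite unitfE => /negbTE ->.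
move=> x y; apply/ffunP => c; rewrite ffunE !gring_mulE.
rewrite (reindex_inj (mulrI tu)) /=.
by apply: eq_bigr => d _; rewrite !ffunE mulrBr.
Qed.

HB.instance Definition _ t := GRing.isZmodMorphism.Build (gring F) (gring F)
  (gscale t) (gscale_is_zmod_morphism t).
HB.instance Definition _ t := GRing.isMonoidMorphism.Build (gring F) (gring F)
  (gscale t) (gscale_is_monoid_morphism t).

Variable a : {unit F} * F -> int.

(* The entry of the group matrix at (u, u i), (v, v j) is a (u / v, u (i - j)). *)
Definition ga_block (u v : {unit F}) : gring F :=
  [ffun d => a ((u * v^-1)%g, val u * d)].
Definition ga_ring_det : gring F := fdet ga_block.

Lemma group_det_GA_blocks (C : numClosedFieldType) :
  (group_det (@GA_mul F) (@GA_inv F) a)%:~R =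
  fdet (fun x y : {unit F} * 'I_#|F| => regmx C (ga_block x.1 y.1) x.2 y.2).
Proof.
pose h (x : {unit F} * 'I_#|F|) : {unit F} * F := (x.1, val x.1 * enum_val x.2).
have bh : bijective h.
  exists (fun y : {unit F} * F => (y.1, enum_rank ((val y.1)^-1 * y.2))).
    by move=> [u i]; rewrite /h /= mulKr ?enum_valK //; exact: valP.
  by move=> [u b]; rewrite /h /= enum_rankK mulVKr //; exact: valP.
rewrite group_detE rmorph_fdet.
rewrite -(fdet_reindex _ bh); apply: eq_fdet => -[u i] [v j].
rewrite /h /= mxE ffunE /GA_mul /GA_inv; congr ((a (_, _))%:~R) => /=.
rewrite mulKr; last exact: valP.
by rewrite mulrN addrC -mulrBr.
Qed.

Lemma ga_ring_det_scale (t : {unit F}) d : ga_ring_det (val t * d) = ga_ring_det d.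
Proof.
suff /ffunP/(_ d) : gscale t ga_ring_det = ga_ring_det by rewrite ffunE.
rewrite rmorph_fdet -[RHS](fdet_reindex (h := fun u => (u * t)%g)); last first.
  by exists (fun u => (u * t^-1)%g) => u; rewrite ?mulgK ?mulgKV.
apply: eq_fdet => u v; apply/ffunP => c; rewrite /ga_block !ffunE.
by rewrite invMg -mulgA mulKVg FinRing.val_unitM mulrA.
Qed.

Lemma ga_ring_det_const c : c != 0 -> ga_ring_det c = ga_ring_det 1.
Proof.
by rewrite -unitfE => cu; rewrite -(ga_ring_det_scale (FinRing.Unit cu) 1) mulr1.
Qed.

Lemma augment_ga_block u v : augment (ga_block u v) = \sum_b a ((u * v^-1)%g, b).
Proof.
rewrite /augment [RHS](reindex_inj (mulrI (valP u))) /=.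
by apply: eq_bigr => d _; rewrite ffunE.
Qed.

End AffineGroup.

Lemma group_det_GA (F : finFieldType) (a : {unit F} * F -> int) :
  group_det (@GA_mul F) (@GA_inv F) a
  = augment (ga_ring_det a) * (ga_ring_det a 0 - ga_ring_det a 1) ^+ #|F|.-1.
Proof.
have [P Pu Ptrig] := regmx_cotrig algC F.
apply: (@intr_inj algC); rewrite group_det_GA_blocks (fdet_regmx_blocks Pu Ptrig).
exact/prod_diag_char_const_off0/ga_ring_det_const.
Qed.

Lemma Zm_int_det_augment (F : finFieldType) (a : {unit F} * F -> int) :
  Zm_int_det #|F|.-1 (augment (ga_ring_det a)).
Proof.
rewrite rmorph_fdet (eq_fdet (augment_ga_block a)) -card_finField_unit cardsT.
exact: (Zm_int_det_cyclic (fun w => \sum_b a (w, b)) (field_unit_group_cyclic _)).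
Qed.

Unset Implicit Arguments.
Set Strict Implicit.

Theorem theorem1 (p k : nat) (F : finFieldType) :
  prime p -> (0 < k)%N -> #|F| = (p ^ k)%N ->
  forall D : int, int_group_det (@GA_mul F) (@GA_inv F) D ->
  exists A B : int,
    [/\ Zm_int_det (p ^ k).-1 A,
        (B = A %[mod (p ^ k)%N%:Z])%Z
      & D = A * B ^+ (p ^ k).-1].
Proof.
move=> _ _ cardF D [a ->]; rewrite -cardF.
exists (augment (ga_ring_det a)), (ga_ring_det a 0 - ga_ring_det a 1); split.
- exact: Zm_int_det_augment.
- rewrite (augment_const_off0 (@ga_ring_det_const _ a)).
  by rewrite -mulr_natr natz [in RHS]addrC modzMDl.
- exact: group_det_GA.
Qed.
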